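(* Let $P$ be a weighted answer set program, with total choices $\mathcal{T}$, consistent events $\mathcal{C}$, and the probability functions $P_{\mathcal{T}}$ on total choices and $P_{\mathcal{E}}$ on events defined below. If there is a consistent event $e\in\mathcal{C}\setminus\mathcal{T}$ with $P_{\mathcal{E}}(e)\neq 0$, then there is at least one total choice $t\in\mathcal{T}$ with $P_{\mathcal{T}}(t)\neq P_{\mathcal{E}}(t)$.
   Context: Let $\mathcal{A}$ be a finite set of positive atoms; atoms are $a$ and $\overline a$ (classical negation $\neg a$) for $a\in\mathcal{A}$. A weighted answer set program (WASP) is an answer set program (rules $h_1\vee\dots\vee h_n\leftarrow b_1\wedge\dots\wedge b_m$, $h_i$ atoms, $b_j$ atoms or $\mathrm{not}\,a$) together with a set $\mathcal{W}$ of weighted facts $a:w$, $a\in\mathcal{A}$, $w\in[0,1]$; $\mathcal{A}_{\mathcal{W}}$ is the set of atoms occurring in weighted facts. The derived program replaces each $a:w$ by $a\vee\overline a$; the stable models of the WASP are the (Gelfond–Lifschitz) stable models of the derived program; their set is $\mathcal{M}$. Events are subsets of $\{a,\overline a:a\in\mathcal{A}\}$ (set $\mathcal{E}$); an event is inconsistent if it contains some $x$ and $\overline x$, else consistent (set $\mathcal{C}$). A total choice is a set containing exactly one of $a,\overline a$ for each $a\in\mathcal{A}_{\mathcal{W}}$ (so total choices are events); $\mathcal{T}$ is their set. Its weight is $w_{\mathcal{T}}(t)=\prod_{a:w\in\mathcal{W},\,a\in t} w\cdot\prod_{a:w\in\mathcal{W},\,\overline a\in t}(1-w)$, and $P_{\mathcal{T}}(t)=w_{\mathcal{T}}(t)/\sum_{\tau\in\mathcal{T}}w_{\mathcal{T}}(\tau)$.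 For $t\in\mathcal{T}$, $\mathcal{M}(t)\subseteq\mathcal{M}$ is the set of stable models entailed by $t$ (stable models of the program with each weighted fact replaced by the fact chosen in $t$). Parameters $\theta_{s,t}\in[0,1]$ are given for $s\in\mathcal{M}(t)$ with $\sum_{s\in\mathcal{M}(t)}\theta_{s,t}=1$; set $w_{\mathcal{M}}(s,t)=\theta_{s,t}$ if $s\in\mathcal{M}(t)$ and $0$ otherwise, and $w_{\mathcal{M}}(X,t)=\sum_{s\in X}w_{\mathcal{M}}(s,t)$ for $X\subseteq\mathcal{M}$. The stable core of an event $e$ is $\sigma(e)=\{s\in\mathcal{M}: s\subseteq e\text{ or }e\subseteq s\}$. Events $u\sim v$ iff both are inconsistent or both are consistent with $\sigma(u)=\sigma(v)$; $[e]$ is the class of $e$ and $\#[e]$ its cardinality. Define $w_{\mathcal{R}}([e],t)=0$ if $e$ is inconsistent and $w_{\mathcal{R}}([e],t)=w_{\mathcal{M}}(\sigma(e),t)$ otherwise; $w_{\mathcal{E}}(e,t)=w_{\mathcal{R}}([e],t)/\#[e]$ (and $0$ if $\#[e]=0$); $w_{\mathcal{E}}(e)=\sum_{t\in\mathcal{T}}w_{\mathcal{T}}(t)\,w_{\mathcal{E}}(e,t)$; $Z=\sum_{e\in\mathcal{E}}w_{\mathcal{E}}(e)$; and $P_{\mathcal{E}}(e)=w_{\mathcal{E}}(e)/Z$. *)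

From mathcomp Require Import all_boot all_order all_algebra.
Set Implicit Arguments. Unset Strict Implicit. Unset Printing Implicit Defensive.
Import Order.TTheory GRing.Theory Num.Theory.
Local Open Scope ring_scope.

Section WASP.
Variable R : realFieldType.
Variable A : finType.

(* literals: (a, true) is the atom a, (a, false) is its classical negation abar *)
Definition lit := (A * bool)%type.
Definition event := {set lit}.

(* a rule  h_1 v ... v h_n <- b_1, ..., b_k, not c_1, ..., not c_m *)
Record rule := Rule { head : seq lit; pbody : seq lit; nbody : seq lit }.
Definition program := seq rule.

Definition consistent (e : event) : bool :=
  [forall a : A, ~~ (((a, true) \in e) && ((a, false) \in e))].

(* X satisfies the Gelfond-Lifschitz reduct of P w.r.t. M *)
Definition closed_reduct (P : program) (M X : event) : bool :=
  all (fun r => ~~ has (fun c => c \in M) (nbody r) ==>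
                 (all (fun b => b \in X) (pbody r) ==> has (fun h => h \in X) (head r))) P.

Definition stable (P : program) (M : event) : bool :=
  [&& consistent M, closed_reduct P M M &
      [forall X : {set lit}, ((X \subset M) && closed_reduct P M X) ==> (X == M)]].

Definition stable_models (P : program) : {set event} := [set M | stable P M].

(* weighted facts a : w, at most one weight per atom *)
Variable prog : program.
Variable wt : A -> option R.

Definition inW (a : A) : bool := wt a != None.

Definition fact (x : lit) : rule := Rule [:: x] [::] [::].

Definition derived_program : program :=
  prog ++ [seq Rule [:: (a, true); (a, false)] [::] [::] | a <- enum A & inW a].

Definition MM : {set event} := stable_models derived_program.

Definition total_choice (t : event) : bool :=
  [forall a : A, if inW a then ((a, true) \in t) (+) ((a, false) \in t)
                 else ((a, true) \notin t) && ((a, false) \notin t)].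

Definition wT (t : event) : R :=
  \prod_(a : A) match wt a with
                | Some w => if (a, true) \in t then w else 1 - w
                | None => 1
                end.

Definition PT (t : event) : R :=
  wT t / \sum_(tau : {set lit} | total_choice tau) wT tau.

Definition Mt (t : event) : {set event} :=
  stable_models (prog ++ [seq fact x | x <- enum t]).

Variable theta : event -> event -> R.

Definition wM (X : {set event}) (t : event) : R :=
  \sum_(s in X) (if s \in Mt t then theta s t else 0).

Definition sigma (e : event) : {set event} :=
  [set s in MM | (s \subset e) || (e \subset s)].

Definition ev_equiv (u v : event) : bool :=
  (~~ consistent u && ~~ consistent v) ||
  [&& consistent u, consistent v & sigma u == sigma v].

Definition ev_class (e : event) : {set event} := [set u | ev_equiv u e].

Definition wR (e : event) (t : event) : R :=
  if consistent e then wM (sigma e) t else 0.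

Definition wEt (e t : event) : R :=
  if #|ev_class e| == 0%N then 0 else wR e t / (#|ev_class e|)%:R.

Definition wE (e : event) : R :=
  \sum_(t : {set lit} | total_choice t) wT t * wEt e t.

Definition Z : R := \sum_(e : {set lit}) wE e.

Definition PE (e : event) : R := wE e / Z.

End WASP.

(* P_E is a probability distribution on all events and P_T one on total
   choices.  If the two agreed on every total choice, P_E would already give
   mass 1 to the total choices, so, being nonnegative, it would vanish on
   every other event. *)
From mathcomp Require Import all_boot all_order all_algebra.
Import Order.TTheory GRing.Theory Num.Theory.
Set Implicit Arguments. Unset Strict Implicit. Unset Printing Implicit Defensive.
Local Open Scope ring_scope.

Lemma psumr_eq_sumP_eq0 (R : numDomainType) (T : finType) (P : pred T)
    (f : T -> R) :
  (forall x, 0 <= f x) -> \sum_x f x = \sum_(x | P x) f x ->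
  forall x, ~~ P x -> f x = 0.
Proof.
move=> f_ge0 sumfP; apply: (psumr_eq0P (fun x _ => f_ge0 x)).
apply: (addrI (\sum_(x | P x) f x)).
by rewrite addr0 -[RHS]sumfP [RHS](bigID P).
Qed.

Lemma sumr_normalized (R : fieldType) (T : finType) (P : pred T) (f : T -> R) :
  \sum_(x | P x) f x != 0 -> \sum_(x | P x) (f x / \sum_(y | P y) f y) = 1.
Proof. by move=> sum_neq0; rewrite -mulr_suml divff. Qed.

Section WaspProbabilities.
Variables (R : realFieldType) (A : finType) (prog : program A).
Variables (wt : A -> option R) (theta : event A -> event A -> R).
Hypothesis wt_unit : forall a w, wt a = Some w -> 0 <= w <= 1.
Hypothesis theta_ge0 :
  forall t, total_choice wt t -> forall s, s \in Mt prog t -> 0 <= theta s t.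

Lemma wT_ge0 t : 0 <= wT wt t.
Proof.
apply: prodr_ge0 => a _; case wt_a: (wt a) => [w|] //.
by have /andP[w_ge0 w_le1] := wt_unit wt_a; case: ifP; rewrite ?subr_ge0.
Qed.

Lemma wEt_ge0 e t : total_choice wt t -> 0 <= wEt prog wt theta e t.
Proof.
move=> tc_t; rewrite /wEt /wR; case: ifP => // _; apply: divr_ge0 => //.
case: ifP => // _; apply: sumr_ge0 => s _.
by case: ifP => // /(theta_ge0 tc_t).
Qed.

Lemma wE_ge0 e : 0 <= wE prog wt theta e.
Proof. by apply: sumr_ge0 => t tc_t; rewrite mulr_ge0 ?wT_ge0 ?wEt_ge0. Qed.

Lemma PE_ge0 e : 0 <= PE prog wt theta e.
Proof. by rewrite divr_ge0 ?wE_ge0 ?sumr_ge0 // => e' _; apply: wE_ge0. Qed.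

Lemma Z_neq0 e : PE prog wt theta e != 0 -> Z prog wt theta != 0.
Proof. by apply: contraNneq => Z0; rewrite /PE Z0 invr0 mulr0. Qed.

Lemma sum_wT_neq0 :
  Z prog wt theta != 0 -> \sum_(t | total_choice wt t) wT wt t != 0.
Proof.
apply: contraNneq => /(psumr_eq0P (fun t _ => wT_ge0 t)) wT0.
rewrite /Z big1 // => e _; rewrite /wE big1 // => t tc_t.
by rewrite wT0 ?mul0r.
Qed.

Lemma sum_PE : Z prog wt theta != 0 -> \sum_e PE prog wt theta e = 1.
Proof. by move=> Z_neq0; rewrite -mulr_suml divff. Qed.

Lemma sum_PT :
  Z prog wt theta != 0 -> \sum_(t | total_choice wt t) PT wt t = 1.
Proof. by move=> Z_neq0; apply: sumr_normalized; apply: sum_wT_neq0. Qed.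

End WaspProbabilities.

Theorem mainTheorem2 (R : realFieldType) (A : finType)
  (prog : program A) (wt : A -> option R)
  (theta : event A -> event A -> R) :
  (forall a w, wt a = Some w -> 0 <= w <= 1) ->
  (forall t : event A, total_choice wt t ->
     (forall s, s \in Mt prog t -> 0 <= theta s t <= 1) /\
     \sum_(s in Mt prog t) theta s t = 1) ->
  (exists e : event A, consistent e /\ ~~ total_choice wt e /\
     PE prog wt theta e != 0) ->
  exists t : event A, total_choice wt t /\ PT wt t != PE prog wt theta t.
Proof.
move=> wt_unit theta_prob [e [_ [not_tc_e PE_e_neq0]]].
have theta_ge0 t (tc_t : total_choice wt t) s (s_t : s \in Mt prog t) :
    0 <= theta s t.
  by have /andP[] := (theta_prob t tc_t).1 s s_t.
have Z_neq0 := Z_neq0 PE_e_neq0.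
case: (pickP (fun t => total_choice wt t && (PT wt t != PE prog wt theta t)))
  => [t /andP[tc_t PT_neq_PE] | PT_eq_PE]; first by exists t.
have {}PT_eq_PE t : total_choice wt t -> PT wt t = PE prog wt theta t.
  by move=> tc_t; have := PT_eq_PE t; rewrite tc_t => /negbFE/eqP.
have sum_PE_tc : \sum_e PE prog wt theta e =
                 \sum_(t | total_choice wt t) PE prog wt theta t.
  rewrite sum_PE // -(sum_PT wt_unit Z_neq0).
  by apply: eq_bigr => t /PT_eq_PE.
have := psumr_eq_sumP_eq0 (PE_ge0 wt_unit theta_ge0) sum_PE_tc not_tc_e.
by move/eqP: PE_e_neq0.
Qed.
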